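(* Let $\mathbb{F}$ be an infinite field with $\operatorname{char}(\mathbb{F})\neq 2$, let $G$ be a group with a group involution $\ast$ and a non-trivial orientation $\sigma$ such that $gg^\ast\in N=\ker\sigma$ for all $g\in G$, and let $\circledast$ be the associated oriented involution of $\mathbb{F}G$. Assume $\mathbb{F}G$ is normal with respect to $\circledast$, and let $g,h\in G$. (1) If $\sigma(g)\sigma(h)=1$, then either $gh=hg$ or $gh=g^\ast h^\ast$. (2) If $\sigma(g)\sigma(h)=-1$, then either $gh=hg$ or $gh=(gh)^\ast$.
   Context: A group involution on $G$ is a map $\ast:G\to G$ with $(gh)^\ast=h^\ast g^\ast$ and $(g^\ast)^\ast=g$. An orientation is a group homomorphism $\sigma:G\to\{\pm1\}$. The oriented involution is $\circledast:\mathbb{F}G\to\mathbb{F}G$, $(\sum_g\alpha_g g)^\circledast=\sum_g\alpha_g\sigma(g)g^\ast$; the condition $gg^\ast\in\ker\sigma$ for all $g$ ensures it is an algebra involution. $\mathbb{F}G$ is normal (with respect to $\circledast$) if $\alpha\alpha^\circledast=\alpha^\circledast\alpha$ for all $\alpha\in\mathbb{F}G$. *)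

From HB Require Import structures.
From mathcomp Require Import all_boot all_order all_algebra.
Set Implicit Arguments. Unset Strict Implicit. Unset Printing Implicit Defensive.
Import GRing.Theory.
Local Open Scope ring_scope.

(* Group algebra F[G] of an arbitrary (possibly infinite) group G:
   an element is represented by a finite formal sum, i.e. a list of
   (coefficient, group element) pairs; two representations denote the same
   element of F[G] iff they have the same coefficient function [fg_coef]. *)
Section GroupAlgebra.
Variables (F : fieldType) (G : groupType).

Definition fg_elt := seq (F * G).

Definition fg_coef (a : fg_elt) (x : G) : F :=
  \sum_(p <- a | p.2 == x) p.1.

Definition fg_mul (a b : fg_elt) : fg_elt :=
  [seq (p.1 * q.1, (p.2 * q.2)%g) | p <- a, q <- b].

Definition group_involution (star : G -> G) : Prop :=
  (forall g h : G, star (g * h)%g = (star h * star g)%g) /\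
  (forall g : G, star (star g) = g).

Definition orientation (sigma : G -> int) : Prop :=
  (forall g : G, sigma g = 1 \/ sigma g = -1) /\
  (forall g h : G, sigma (g * h)%g = sigma g * sigma h).

Definition fg_oinv (star : G -> G) (sigma : G -> int) (a : fg_elt) : fg_elt :=
  [seq (p.1 * (sigma p.2)%:~R, star p.2) | p <- a].

Definition fg_normal (star : G -> G) (sigma : G -> int) : Prop :=
  forall a : fg_elt, forall x : G,
    fg_coef (fg_mul a (fg_oinv star sigma a)) x =
    fg_coef (fg_mul (fg_oinv star sigma a) a) x.

End GroupAlgebra.

(* Normality applied to the single element g gives g g^* = g^* g.  Applied to
   g + h^* and compared at the coefficient of gh, the commuting terms cancel and
   what remains is  1 + e [gh = (gh)^*] = e [gh = g^*h^*] + [gh = hg]  in F, with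
   e = sigma(g) sigma(h) and [_] the indicator.  If the conclusion failed, this
   would force 1 = 0 or 2 = 0. *)
From HB Require Import structures.
From mathcomp Require Import all_boot all_order all_algebra.
Set Implicit Arguments.
Unset Strict Implicit.
Unset Printing Implicit Defensive.
Import GRing.Theory.
Local Open Scope ring_scope.

Lemma fg_coef_nil (F : fieldType) (G : groupType) (x : G) :
  fg_coef [::] x = 0 :> F.
Proof. exact: big_nil. Qed.

Lemma fg_coef_cons (F : fieldType) (G : groupType) (p : F * G) a x :
  fg_coef (p :: a) x = p.1 * (p.2 == x)%:R + fg_coef a x.
Proof. by rewrite /fg_coef big_cons; case: eqP; rewrite ?mulr1 ?mulr0 ?add0r. Qed.

Lemma one_plus_natr_bool_neq0 (R : nzRingType) (b : bool) :
  (2%:R : R) != 0 -> 1 + b%:R != 0 :> R.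
Proof. by case: b => ? //=; rewrite addr0 oner_neq0. Qed.

Section NormalGroupAlgebra.
Variables (F : fieldType) (G : groupType) (star : G -> G) (sigma : G -> int).
Hypothesis Hstar : group_involution star.
Hypothesis Hsigma : orientation sigma.
Hypothesis Hker : forall g : G, sigma (g * star g)%g = 1.
Hypothesis Hnormal : fg_normal F star sigma.

Local Notation sg x := ((sigma x)%:~R : F).

Lemma orientation_mul_self (g : G) : sigma g * sigma g = 1.
Proof. by case: (Hsigma.1 g) => ->. Qed.

Lemma orientation_star (g : G) : sigma (star g) = sigma g.
Proof.
have := Hker g; rewrite Hsigma.2 => sgg.
by rewrite -[sigma (star g)]mul1r -(orientation_mul_self g) -mulrA sgg mulr1.
Qed.

Lemma fg_normal_mul_star_comm (g : G) : (g * star g)%g = (star g * g)%g.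
Proof.
have := Hnormal [:: (1, g)] (g * star g)%g.
rewrite /fg_mul /fg_oinv /= !fg_coef_cons !fg_coef_nil /= eqxx !addr0 !mul1r mulr1.
case: eqP => // _; rewrite mulr0 => /eqP.
by case: (Hsigma.1 g) => ->; rewrite ?oppr_eq0 oner_eq0.
Qed.

Lemma fg_normal_coef_pair (g h x : G) :
  sg h * ((g * h)%g == x)%:R + sg g * (star (g * h)%g == x)%:R =
  sg g * ((star g * star h)%g == x)%:R + sg h * ((h * g)%g == x)%:R.
Proof.
have := Hnormal [:: (1, g); (1, star h)] x.
rewrite /fg_mul /fg_oinv /= !fg_coef_cons !fg_coef_nil /= !mul1r.
rewrite Hstar.2 orientation_star -Hstar.1 !mulr1 !addr0.
have comm_h := fg_normal_mul_star_comm (star h); rewrite Hstar.2 in comm_h.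
rewrite fg_normal_mul_star_comm comm_h.
by move/addrI; rewrite !addrA => /addIr.
Qed.

Lemma fg_normal_coef_pair_at (g h : G) :
  1 + (sigma g * sigma h)%:~R * ((g * h)%g == star (g * h))%:R =
  (sigma g * sigma h)%:~R * ((g * h)%g == (star g * star h)%g)%:R
    + ((g * h)%g == (h * g)%g)%:R :> F.
Proof.
have sh2 : sg h * sg h = 1 by rewrite -intrM orientation_mul_self.
have := congr1 (fun y => sg h * y) (fg_normal_coef_pair g h (g * h)%g).
rewrite !mulrDr !mulrA sh2 eqxx mulr1 mul1r ![_ == (g * h)%g]eq_sym.
by rewrite intrM [sg g * _]mulrC.
Qed.

End NormalGroupAlgebra.

Theorem lemma6 (F : fieldType) (G : groupType)
  (star : G -> G) (sigma : G -> int)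
  (F_infinite : forall s : seq F, exists x : F, x \notin s)
  (char_not2 : (2%:R : F) != 0)
  (Hstar : group_involution star)
  (Hsigma : orientation sigma)
  (Hnontriv : exists g : G, sigma g <> 1)
  (Hker : forall g : G, sigma (g * star g)%g = 1)
  (Hnormal : fg_normal F star sigma)
  (g h : G) :
  (sigma g * sigma h = 1 ->
     (g * h)%g = (h * g)%g \/ (g * h)%g = (star g * star h)%g) /\
  (sigma g * sigma h = -1 ->
     (g * h)%g = (h * g)%g \/ (g * h)%g = star (g * h)%g).
Proof.
have coef := fg_normal_coef_pair_at Hstar Hsigma Hker Hnormal g h.
split=> e; rewrite e in coef;
  (case: (eqVneq (g * h)%g (h * g)%g) => [|ne_hg]; [by left | right]).
- rewrite mulr1z !mul1r in coef.
  apply/eqP; apply: contraTT (one_plus_natr_bool_neq0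
                               ((g * h)%g == star (g * h)%g) char_not2).
  by move=> ne_s; rewrite negbK coef (negPf ne_s) (negPf ne_hg) addr0.
- rewrite mulrN1z !mulN1r in coef.
  apply/eqP; apply: contraTT (one_plus_natr_bool_neq0
                               ((g * h)%g == (star g * star h)%g) char_not2).
  move=> ne_s; rewrite (negPf ne_s) (negPf ne_hg) subr0 addr0 in coef.
  by rewrite negbK {1}coef addNr.
Qed.
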